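(* Let $I,S\ge 0$ be integers and consider the pairing process described in the context. The minimum, over all possible wirings, of the number of bb-pairings equals $$L(I,S)=\begin{cases}0 & \text{if } I\le S,\\ \frac{I-S}{2} & \text{if } I>S \text{ and } I-S \text{ is even},\\ \frac{I-S-1}{2} & \text{if } I>S \text{ and } I-S \text{ is odd},\end{cases}$$ and the maximum number of bb-pairings in a possible wiring is $\lfloor I/2\rfloor$.
   Context: Pairing process: there are $I$ infected devices $b_1,\dots,b_I$ and $S$ clean devices $w_1,\dots,w_S$. For $t=1,\dots,I$ in this order: if $b_t$ is not yet paired and at least one device other than $b_t$ is not yet paired, then $b_t$ chooses one of the currently unpaired devices other than itself uniformly at random, independently of previous choices, and becomes paired with it; otherwise $b_t$ does nothing. Each device belongs to at most one pair. The wiring is the final set of pairs; a bb-pairing is a pair consisting of two infected devices; a wiring is possible if it occurs with positive probability. *)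

From mathcomp Require Import all_boot.
Set Implicit Arguments. Unset Strict Implicit. Unset Printing Implicit Defensive.

(* Devices are the naturals 0 .. I+S-1.  Infected device b_{t+1} is the
   number t (for t < I); clean device w_{j+1} is the number I + j (j < S).
   A (partial) wiring is a list of pairs (x, y): infected device x chose y. *)

Definition pairing := seq (nat * nat).

Definition paired (w : pairing) (x : nat) : bool :=
  has (fun p : nat * nat => (p.1 == x) || (p.2 == x)) w.

Definition exists_free_other (I S : nat) (w : pairing) (x : nat) : bool :=
  has (fun y => (y != x) && ~~ paired w y) (iota 0 (I + S)).

(* reach I S t w : after infected devices 0..t-1 have acted, the current set
   of pairs w occurs with positive probability.  Since each choice is uniform
   over a nonempty finite set, an outcome has positive probability iff it is
   obtained by some sequence of admissible choices. *)
Inductive reach (I S : nat) : nat -> pairing -> Prop :=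
| reach0 : reach I S 0 [::]
| reach_skip_paired t w :
    reach I S t w -> t < I -> paired w t -> reach I S t.+1 w
| reach_skip_nofree t w :
    reach I S t w -> t < I -> ~~ paired w t ->
    ~~ exists_free_other I S w t -> reach I S t.+1 w
| reach_choose t w y :
    reach I S t w -> t < I -> ~~ paired w t ->
    y < I + S -> y != t -> ~~ paired w y ->
    reach I S t.+1 ((t, y) :: w).

Definition possible (I S : nat) (w : pairing) : Prop := reach I S I w.

Definition n_bb (I : nat) (w : pairing) : nat :=
  count (fun p : nat * nat => (p.1 < I) && (p.2 < I)) w.

Definition L (I S : nat) : nat :=
  if I <= S then 0
  else if ~~ odd (I - S) then (I - S) %/ 2
  else (I - S - 1) %/ 2.

(* Every pair contains the infected device that chose it, so in any wiring the
   number of paired infected devices equals the number of paired clean devices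
   plus twice the number of bb-pairings.  An infected device that stays unpaired
   found every other device already paired; hence in a possible wiring either
   all I infected devices are paired (and at most S clean ones), or exactly I-1
   infected and all S clean devices are.  This yields I-S <= 2 bb + 1 and
   2 bb <= I.  Both bounds are attained by letting the first m infected devices
   choose clean partners and pairing the remaining infected devices with each
   other: m = min I S gives L I S, and m = I mod 2 (when S > 0) gives I/2. *)

From mathcomp Require Import all_boot zify.

Lemma count_mem_uniq_swap (T : eqType) (s r : seq T) :
  uniq s -> uniq r -> count (mem r) s = count (mem s) r.
Proof.
move=> us ur; rewrite -!size_filter; apply/perm_size/uniq_perm.
- exact: filter_uniq.
- exact: filter_uniq.
by move=> x; rewrite !mem_filter andbC.
Qed.

Fixpoint devices (w : pairing) : seq nat :=
  if w is p :: w' then p.1 :: p.2 :: devices w' else [::].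

Lemma paired_devices w x : paired w x = (x \in devices w).
Proof.
elim: w => [|[a b] w IH] //=; rewrite /paired /= -/(paired w x) IH !in_cons.
by rewrite ![_ == x]eq_sym orbA.
Qed.

Lemma paired_cons p w x :
  paired (p :: w) x = (p.1 == x) || (p.2 == x) || paired w x.
Proof. by []. Qed.

Lemma paired_cat w1 w2 x : paired (w1 ++ w2) x = paired w1 x || paired w2 x.
Proof. by rewrite /paired has_cat. Qed.

Lemma count_devices_infected I w : all (fun p : nat * nat => p.1 < I) w ->
  count (fun y => y < I) (devices w) =
  count (fun y => I <= y) (devices w) + (n_bb I w).*2.
Proof.
elim: w => [|[a b] w IH] //= /andP [aI /IH {}IH].
rewrite /n_bb /= -/(n_bb I w); lia.
Qed.

Record wiring_inv (I S t : nat) (w : pairing) : Prop := WiringInv {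
  wiring_uniq : uniq (devices w);
  wiring_bound : all (fun y => y < I + S) (devices w);
  wiring_chooser : all (fun p : nat * nat => p.1 < I) w;
  wiring_unpaired : forall x, x < t -> x < I -> ~~ paired w x ->
     forall y, y < I + S -> y != x -> paired w y
}.

Lemma reach_wiring_inv I S t w : reach I S t w -> wiring_inv I S t w.
Proof.
elim=> {t w} [|t w _ [u b f d] _ pt|t w _ [u b f d] _ _ nf|
               t w y _ [u b f d] tI pt yl yt py].
- by constructor.
- constructor=> // x; rewrite ltnS leq_eqVlt => /predU1P [->|]; last exact: d.
  by rewrite pt.
- constructor=> // x; rewrite ltnS leq_eqVlt => /predU1P [-> _ _ y yl yt|];
    last exact: d.
  by move/hasPn: nf => /(_ y); rewrite mem_iota yl yt negbK => ->.
- constructor=> /=.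
  + by rewrite u andbT !inE negb_or -!paired_devices pt py eq_sym yt.
  + by rewrite b !andbT; apply/andP; split; lia.
  + by rewrite tI.
  + move=> x; rewrite ltnS leq_eqVlt => /predU1P [->|xt xI].
      by rewrite eqxx.
    rewrite !negb_or => /andP [_ px] z zl zx.
    by rewrite (d x xt xI px z zl zx) orbT.
Qed.

Section PossibleWiring.

Variables (I S : nat) (w : pairing).
Hypothesis possible_w : possible I S w.

Let inv_w : wiring_inv I S I w := @reach_wiring_inv I S I w possible_w.

Lemma possible_paired_count :
  count (paired w) (iota 0 I) = count (paired w) (iota I S) + (n_bb I w).*2.
Proof.
have [u b f _] := inv_w.
have count_range a n :
    count (paired w) (iota a n) = count (fun y => a <= y < a + n) (devices w).
  rewrite (eq_count (paired_devices w)) -count_mem_uniq_swap ?iota_uniq //.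
  by apply: eq_count => y /=; rewrite mem_iota.
rewrite !count_range (eq_count (a2 := fun y => y < I)) //.
rewrite count_devices_infected //.
congr (_ + _); apply: eq_in_count => y /(allP b) /=; lia.
Qed.

Lemma possible_paired_infected :
  count (paired w) (iota 0 I) = I \/
  count (paired w) (iota 0 I) = I.-1 /\ count (paired w) (iota I S) = S.
Proof.
have [_ _ _ d] := inv_w.
have [all_paired|/allPn [x]] := boolP (all (paired w) (iota 0 I)).
  by left; rewrite (eq_in_count (a2 := predT)) ?count_predT ?size_iota //;
    exact/allP.
rewrite mem_iota => /= xI px; right.
have others : forall y, y < I + S -> y != x -> paired w y := d x xI xI px.
split.
- rewrite (@eq_in_count _ _ (predC (pred1 x))) => [|y]; last first.
    rewrite mem_iota /= => yI; have [->|yx] := eqVneq y x; first exact/negbTE.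
    by apply: others; lia.
  have := count_predC (pred1 x) (iota 0 I).
  by rewrite count_uniq_mem ?iota_uniq // mem_iota xI size_iota; lia.
- rewrite (eq_in_count (a2 := predT)) ?count_predT ?size_iota // => y.
  by rewrite mem_iota => yr; apply: others; lia.
Qed.

Lemma possible_bb_le_half : n_bb I w <= I %/ 2.
Proof.
have := possible_paired_count; have := count_size (paired w) (iota 0 I).
rewrite size_iota; lia.
Qed.

Lemma possible_bb_ge_half_excess : (I - S) %/ 2 <= n_bb I w.
Proof.
have := possible_paired_count; have := count_size (paired w) (iota I S).
rewrite size_iota; case: possible_paired_infected => [|[]] -> //; lia.
Qed.

End PossibleWiring.

Lemma L_half_excess I S : L I S = (I - S) %/ 2.
Proof.
rewrite /L; case: ifP => IS; first lia.
by have := modn2 (I - S); case: (odd (I - S)) => /=; lia.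
Qed.

Fixpoint cross_pairs (I k : nat) : pairing :=
  if k is k'.+1 then (k', I + k') :: cross_pairs I k' else [::].

Fixpoint bb_pairs (m j : nat) : pairing :=
  if j is j'.+1 then (m + j'.*2, (m + j'.*2).+1) :: bb_pairs m j' else [::].

Lemma paired_cross_pairs I k x :
  paired (cross_pairs I k) x = (x < k) || (I <= x < I + k).
Proof. by elim: k => [|k IH] /=; rewrite ?paired_cons ?IH /=; lia. Qed.

Lemma paired_bb_pairs m j x : paired (bb_pairs m j) x = (m <= x < m + j.*2).
Proof. by elim: j => [|j IH] /=; rewrite ?paired_cons ?IH /=; lia. Qed.

Lemma n_bb_cross_pairs I k : n_bb I (cross_pairs I k) = 0.
Proof. by elim: k => //= k IH; rewrite /n_bb /= -/(n_bb I _) IH; lia. Qed.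

Lemma n_bb_bb_pairs I m j : m + j.*2 <= I -> n_bb I (bb_pairs m j) = j.
Proof. by elim: j => //= j IH h; rewrite /n_bb /= -/(n_bb I _) IH; lia. Qed.

Section Construction.

Variables (I S m : nat).
Hypotheses (mI : m <= I) (mS : m <= S).

Lemma reach_cross_pairs k : k <= m -> reach I S k (cross_pairs I k).
Proof.
elim: k => [|k IH] km; first exact: reach0.
by apply: reach_choose; rewrite ?paired_cross_pairs; try apply: IH; lia.
Qed.

Lemma reach_bb_pairs j : m + j.*2 <= I ->
  reach I S (m + j.*2) (bb_pairs m j ++ cross_pairs I m).
Proof.
elim: j => [|j IH] jI; first by rewrite addn0; exact: reach_cross_pairs.
rewrite doubleS !addnS; apply: reach_skip_paired; first apply: reach_choose.
all: rewrite ?paired_cons ?paired_cat ?paired_cross_pairs ?paired_bb_pairs /=;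
  try apply: IH; lia.
Qed.

(* After the first m choices the infected devices pair up among themselves; a
   last odd one out is stuck only if no clean device is left, i.e. m = S. *)
Lemma possible_bb_pairs : (I - m) %% 2 = 0 \/ m = S ->
  exists2 w, possible I S w & n_bb I w = (I - m) %/ 2.
Proof.
move=> parity; set j := (I - m) %/ 2.
have jI : m + j.*2 <= I by rewrite /j; lia.
exists (bb_pairs m j ++ cross_pairs I m).
  rewrite /possible.
  have [I_even|[I_odd mSe]] : I = m + j.*2 \/ I = (m + j.*2).+1 /\ m = S.
  - by rewrite /j; lia.
  - by rewrite [X in reach _ _ X _]I_even; exact: reach_bb_pairs.
  rewrite [X in reach _ _ X _]I_odd.
  apply: reach_skip_nofree; first exact: reach_bb_pairs.
  - lia.
  - rewrite paired_cat paired_cross_pairs paired_bb_pairs; lia.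
  apply/hasPn => y; rewrite mem_iota /= => yl.
  rewrite paired_cat paired_cross_pairs paired_bb_pairs; lia.
by rewrite /n_bb count_cat -!/(n_bb I _) n_bb_cross_pairs n_bb_bb_pairs ?addn0.
Qed.

End Construction.

Theorem lemma1 (I S : nat) :
  ((exists w, possible I S w /\ n_bb I w = L I S) /\
   (forall w, possible I S w -> L I S <= n_bb I w)) /\
  ((exists w, possible I S w /\ n_bb I w = I %/ 2) /\
   (forall w, possible I S w -> n_bb I w <= I %/ 2)).
Proof.
split; split.
- have parity : (I - minn I S) %% 2 = 0 \/ minn I S = S by lia.
  have [w pw bb] :=
    possible_bb_pairs _ _ _ (geq_minl I S) (geq_minr I S) parity.
  by exists w; rewrite L_half_excess bb; split => //; lia.
- by move=> w pw; rewrite L_half_excess; exact: possible_bb_ge_half_excess.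
- pose m := if (I %% 2 == 1) && (0 < S) then 1 else 0.
  have [w pw bb] : exists2 w, possible I S w & n_bb I w = (I - m) %/ 2.
    by apply: possible_bb_pairs; rewrite /m; case: ifP => /=; lia.
  by exists w; split => //; rewrite bb /m; case: ifP => /=; lia.
- exact: possible_bb_le_half.
Qed.
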